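(* Let $\mathcal{L},\mathcal{L}'$ be distributive abstract logics and $h:\mathcal{L}\to\mathcal{L}'$ a stable logic map. Then $h$ is a lattice morphism of the associated lattices: for all $a,b\in Expr_{\mathcal{L}}$, $h(a\vee b)=_{\mathcal{L}'}h(a)\vee h(b)$ and $h(a\wedge b)=_{\mathcal{L}'}h(a)\wedge h(b)$.
   Context: An abstract logic is a triple $\mathcal{L}=(Expr_{\mathcal{L}},Th_{\mathcal{L}},\mathcal{C}_{\mathcal{L}})$ where $Expr_{\mathcal{L}}$ is a set, $Th_{\mathcal{L}}$ a non-empty set of subsets of $Expr_{\mathcal{L}}$ (theories) closed under intersections of non-empty subfamilies, and $\mathcal{C}_{\mathcal{L}}$ a set of operations on $Expr_{\mathcal{L}}$. $\mathcal{L}$ is closed under union of chains if the union of every non-empty chain of theories is a theory. A theory $T$ is prime if $T=\bigcap\mathcal{T}$ with $\mathcal{T}\subseteq Th_{\mathcal{L}}$ non-empty finite implies $T\in\mathcal{T}$; totally prime if this holds for non-empty $\mathcal{T}$ of any size. $PTh_{\mathcal{L}}$, $TPTh_{\mathcal{L}}$ denote these sets. A distributive abstract logic is one closed under union of chains with binary connectives $\vee,\wedge$ such that for all $a,b$ and all $T\in TPTh_{\mathcal{L}}$: $a\vee b\in T$ iff $a\in T$ or $b\in T$; $a\wedge b\in T$ iff $a,b\in T$. The associated lattice on $Expr_{\mathcal{L}}$ has order $a\le b$ iff every prime theory containing $a$ contains $b$, with meet $\wedge$ and join $\vee$. $x=_{\mathcal{L}'}y$ means $x\Vdash_{\mathcal{L}'}y$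 and $y\Vdash_{\mathcal{L}'}x$, where $x\Vdash_{\mathcal{L}'}y$ means every theory of $\mathcal{L}'$ containing $x$ contains $y$. A stable logic map $h:\mathcal{L}\to\mathcal{L}'$ is a function $Expr_{\mathcal{L}}\to Expr_{\mathcal{L}'}$ with $h^{-1}(T')\in Th_{\mathcal{L}}$ for all $T'\in Th_{\mathcal{L}'}$ and $h^{-1}(P')\in PTh_{\mathcal{L}}$ for all $P'\in PTh_{\mathcal{L}'}$. *)

From Stdlib Require Import List Fin.
Set Implicit Arguments.

Definition Operation (E : Type) : Type := { n : nat & (Fin.t n -> E) -> E }.

Definition binop {E : Type} (f : E -> E -> E) : Operation E :=
  existT _ 2 (fun v => f (v Fin.F1) (v (Fin.FS Fin.F1))).

Definition bigcap {E : Type} (F : (E -> Prop) -> Prop) : E -> Prop :=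
  fun x => forall T, F T -> T x.
Definition bigcup {E : Type} (F : (E -> Prop) -> Prop) : E -> Prop :=
  fun x => exists T, F T /\ T x.

Definition subset {E : Type} (A B : E -> Prop) : Prop := forall x, A x -> B x.

Definition finite_family {E : Type} (F : (E -> Prop) -> Prop) : Prop :=
  exists l : list (E -> Prop), forall T, F T <-> In T l.

Record AbstractLogic : Type := {
  Expr : Type;
  Th : (Expr -> Prop) -> Prop;
  Conn : Operation Expr -> Prop;
  Th_nonempty : exists T, Th T;
  Th_cap : forall F : (Expr -> Prop) -> Prop,
      (exists T, F T) -> (forall T, F T -> Th T) -> Th (bigcap F)
}.

Definition closed_union_chains (L : AbstractLogic) : Prop :=
  forall F : (Expr L -> Prop) -> Prop,
    (exists T, F T) -> (forall T, F T -> Th L T) ->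
    (forall T1 T2, F T1 -> F T2 -> subset T1 T2 \/ subset T2 T1) ->
    Th L (bigcup F).

Definition prime_theory (L : AbstractLogic) (T : Expr L -> Prop) : Prop :=
  Th L T /\
  forall F : (Expr L -> Prop) -> Prop,
    (forall T', F T' -> Th L T') -> (exists T', F T') -> finite_family F ->
    T = bigcap F -> F T.

Definition totally_prime_theory (L : AbstractLogic) (T : Expr L -> Prop) : Prop :=
  Th L T /\
  forall F : (Expr L -> Prop) -> Prop,
    (forall T', F T' -> Th L T') -> (exists T', F T') ->
    T = bigcap F -> F T.

Record DistributiveLogic : Type := {
  dlogic :> AbstractLogic;
  vee : Expr dlogic -> Expr dlogic -> Expr dlogic;
  wedge : Expr dlogic -> Expr dlogic -> Expr dlogic;
  dl_chains : closed_union_chains dlogic;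
  dl_vee_conn : Conn dlogic (binop vee);
  dl_wedge_conn : Conn dlogic (binop wedge);
  dl_vee : forall a b T, totally_prime_theory dlogic T ->
      (T (vee a b) <-> T a \/ T b);
  dl_wedge : forall a b T, totally_prime_theory dlogic T ->
      (T (wedge a b) <-> T a /\ T b)
}.

Definition entails (L : AbstractLogic) (x y : Expr L) : Prop :=
  forall T, Th L T -> T x -> T y.

Definition logic_eq (L : AbstractLogic) (x y : Expr L) : Prop :=
  entails L x y /\ entails L y x.

Definition lat_le (L : AbstractLogic) (a b : Expr L) : Prop :=
  forall P, prime_theory L P -> P a -> P b.

Definition preimage {A B : Type} (h : A -> B) (T : B -> Prop) : A -> Prop :=
  fun x => T (h x).

Definition stable_logic_map (L L' : AbstractLogic) (h : Expr L -> Expr L') : Prop :=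
  (forall T', Th L' T' -> Th L (preimage h T')) /\
  (forall P', prime_theory L' P' -> prime_theory L (preimage h P')).

(* A theory is the intersection of the totally prime theories above it: by
   Zorn's lemma a theory avoiding [x] extends to a maximal one, and maximality
   makes it totally prime.  Hence [wedge] behaves as a meet on every theory, and
   a prime theory [P] also sees [vee] as a join: if [P] contained [a ∨ b] but
   neither [a] nor [b], it would be the intersection of the two theories cut out
   by the totally prime theories above [P] that contain [a], resp. miss [a], and
   primality would put [a] or [b] in [P].  Since [h] pulls theories back to
   theories and prime theories to prime theories, both connectives are
   preserved up to [=_L']. *)
From Stdlib Require Import List Classical.
From mathcomp Require boolp classical_sets.

Set Implicit Arguments.
Unset Strict Implicit.

Lemma or_absorb_l {E : Type} (A B : E -> Prop) :
  subset A B -> (fun y => A y \/ B y) = B.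
Proof.
  intro AB; apply boolp.predeqP; intro y; split; auto.
  intros [Ay | By]; auto.
Qed.

Lemma or_absorb_r {E : Type} (A B : E -> Prop) :
  subset B A -> (fun y => A y \/ B y) = A.
Proof.
  intro BA; apply boolp.predeqP; intro y; split; auto.
  intros [Ay | By]; auto.
Qed.

Section Lindenbaum.
Variable L : AbstractLogic.
Hypothesis chains : closed_union_chains L.

Definition avoiding (T : Expr L -> Prop) (x : Expr L) (S : Expr L -> Prop) : Prop :=
  Th L S /\ subset T S /\ ~ S x.

Lemma avoiding_bigcup T x (F : (Expr L -> Prop) -> Prop) :
  (exists S, F S) -> (forall S, F S -> avoiding T x S) ->
  (forall S1 S2, F S1 -> F S2 -> subset S1 S2 \/ subset S2 S1) ->
  avoiding T x (bigcup F).
Proof.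
  intros [S0 FS0] Favoid Fchain. split; [|split].
  - apply chains; [exists S0; exact FS0 | | exact Fchain].
    intros S FS; apply (Favoid S FS).
  - intros y Ty. exists S0. split; [exact FS0 | apply (Favoid S0 FS0); exact Ty].
  - intros [S [FS Sx]]. apply (Favoid S FS); exact Sx.
Qed.

Lemma avoiding_or_bigcup T x (F : (Expr L -> Prop) -> Prop) :
  avoiding T x T -> (forall X, F X -> avoiding T x (fun y => T y \/ X y)) ->
  (forall X1 X2, F X1 -> F X2 -> subset X1 X2 \/ subset X2 X1) ->
  avoiding T x (fun y => T y \/ classical_sets.bigcup F (fun X => X) y).
Proof.
  intros Tavoid Favoid Fchain.
  destruct (classic (exists X, F X)) as [[X0 FX0] | Fempty].
  - pose (G := fun S => exists X, F X /\ S = (fun y => T y \/ X y)).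
    assert (union_eq :
      bigcup G = (fun y => T y \/ classical_sets.bigcup F (fun X => X) y)).
    { apply boolp.predeqP; intro y; split.
      - intros [S [[X [FX ->]] [Ty | Xy]]]; [left | right; exists X]; assumption.
      - intros [Ty | [X FX Xy]].
        + exists (fun y => T y \/ X0 y); split; [exists X0; auto | left; exact Ty].
        + exists (fun y => T y \/ X y); split; [exists X; auto | right; exact Xy]. }
    rewrite <- union_eq. apply avoiding_bigcup.
    + exists (fun y => T y \/ X0 y); exists X0; split; auto.
    + intros S [X [FX ->]]; exact (Favoid X FX).
    + intros S1 S2 [X1 [FX1 ->]] [X2 [FX2 ->]].
      destruct (Fchain X1 X2 FX1 FX2); [left | right]; intros y [Ty | Xy]; auto.
  - rewrite or_absorb_r; [exact Tavoid|].
    intros y [X FX _]; exfalso; apply Fempty; exists X; exact FX.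
Qed.

(* [classical_sets.Zorn_bigcup] also takes the empty chain, so we maximize over
   the sets [S] such that [T ∪ S] avoids [x]. *)
Lemma maximal_avoiding T x : avoiding T x T ->
  exists M, avoiding T x M /\ forall S, avoiding T x S -> subset M S -> S = M.
Proof.
  intro Tavoid.
  destruct (@classical_sets.Zorn_bigcup _ (fun S => avoiding T x (fun y => T y \/ S y)))
    as [A [TA_avoid Amax]].
  { intros F Favoid Fchain. exact (avoiding_or_bigcup Tavoid Favoid Fchain). }
  exists (fun y => T y \/ A y). split; [exact TA_avoid|].
  intros S Savoid MS. apply boolp.predeqP; intro y; split; [|apply MS].
  intro Sy; apply NNPP; intro My.
  apply (Amax S).
  - split; [intros z Az; apply MS; right; exact Az|].
    intro SA; apply My; right; apply SA; exact Sy.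
  - rewrite or_absorb_l; [exact Savoid | apply Savoid].
Qed.

Lemma maximal_avoiding_totally_prime T x M :
  avoiding T x M -> (forall S, avoiding T x S -> subset M S -> S = M) ->
  totally_prime_theory L M.
Proof.
  intros [ThM [TM Mx]] Mmax. split; [exact ThM|].
  intros F Fth Fne M_eq. apply NNPP; intro FM.
  apply Mx. rewrite M_eq. intros S FS.
  assert (MS : subset M S) by (intros y My; rewrite M_eq in My; exact (My S FS)).
  apply NNPP; intro Sx.
  apply FM. rewrite <- (Mmax S); [exact FS | | exact MS].
  split; [exact (Fth S FS) | split; [intros y Ty; apply MS, TM, Ty | exact Sx]].
Qed.

Lemma lindenbaum T x : Th L T -> ~ T x ->
  exists Q, totally_prime_theory L Q /\ subset T Q /\ ~ Q x.
Proof.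
  intros ThT Tx.
  assert (Tavoid : avoiding T x T)
    by (split; [exact ThT | split; [intros y Ty; exact Ty | exact Tx]]).
  destruct (maximal_avoiding Tavoid) as [M [Mavoid Mmax]].
  exists M. split; [exact (maximal_avoiding_totally_prime Mavoid Mmax) | apply Mavoid].
Qed.

Lemma theory_mem_of_totally_prime T x : Th L T ->
  (forall Q, totally_prime_theory L Q -> subset T Q -> Q x) -> T x.
Proof.
  intros ThT allQ. apply NNPP; intro Tx.
  destruct (lindenbaum ThT Tx) as [Q [HQ [TQ Qx]]].
  exact (Qx (allQ Q HQ TQ)).
Qed.

Lemma entails_of_totally_prime x y :
  (forall Q, totally_prime_theory L Q -> Q x -> Q y) -> entails L x y.
Proof.
  intros allQ T ThT Tx. apply (theory_mem_of_totally_prime ThT).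
  intros Q HQ TQ. apply (allQ Q HQ), TQ, Tx.
Qed.

End Lindenbaum.

Lemma totally_prime_theory_prime (L : AbstractLogic) (Q : Expr L -> Prop) :
  totally_prime_theory L Q -> prime_theory L Q.
Proof.
  intros [ThQ Qprime]. split; [exact ThQ|].
  intros F Fth Fne _ Q_eq. exact (Qprime F Fth Fne Q_eq).
Qed.

Lemma prime_theory_cap2 (L : AbstractLogic) (P A B : Expr L -> Prop) :
  prime_theory L P -> Th L A -> Th L B ->
  (forall y, P y <-> A y /\ B y) -> P = A \/ P = B.
Proof.
  intros [_ Pprime] ThA ThB P_eq.
  apply (Pprime (fun S => S = A \/ S = B)).
  - intros S [-> | ->]; assumption.
  - exists A; left; reflexivity.
  - exists (A :: B :: nil); intro S; simpl; split.
    + intros [-> | ->]; auto.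
    + intros [<- | [<- | []]]; auto.
  - apply boolp.predeqP; intro y; rewrite P_eq; split.
    + intros [Ay By] S [-> | ->]; assumption.
    + intro Fy; split; apply Fy; auto.
Qed.

Section Distributive.
Variable L : DistributiveLogic.

Let chains := dl_chains L.

Lemma theory_wedge T a b : Th L T -> (T (wedge L a b) <-> T a /\ T b).
Proof.
  intro ThT. split.
  - intro Tab; split; apply (theory_mem_of_totally_prime chains ThT);
      intros Q HQ TQ; apply (dl_wedge L a b HQ), TQ, Tab.
  - intros [Ta Tb]. apply (theory_mem_of_totally_prime chains ThT).
    intros Q HQ TQ. apply (dl_wedge L a b HQ); auto.
Qed.

Lemma prime_theory_vee P a b : prime_theory L P -> (P (vee L a b) <-> P a \/ P b).
Proof.
  intro Pprime. pose proof (proj1 Pprime) as ThP. split.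
  - intro Pab. apply NNPP; intro Pab_not.
    pose (with_a := fun Q => totally_prime_theory L Q /\ subset P Q /\ Q a).
    pose (without_a := fun Q => totally_prime_theory L Q /\ subset P Q /\ ~ Q a).
    assert (with_a_ne : exists Q, with_a Q).
    { destruct (lindenbaum chains ThP (fun Pb => Pab_not (or_intror Pb)))
        as [Q [HQ [PQ Qb]]].
      exists Q; split; [exact HQ | split; [exact PQ|]].
      destruct (proj1 (dl_vee L a b HQ) (PQ _ Pab)); tauto. }
    assert (without_a_ne : exists Q, without_a Q).
    { destruct (lindenbaum chains ThP (fun Pa => Pab_not (or_introl Pa)))
        as [Q [HQ [PQ Qa]]].
      exists Q; split; auto. }
    assert (Th_with_a : Th L (bigcap with_a))
      by (apply Th_cap; [exact with_a_ne | intros Q [[] _]; auto]).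
    assert (Th_without_a : Th L (bigcap without_a))
      by (apply Th_cap; [exact without_a_ne | intros Q [[] _]; auto]).
    destruct (prime_theory_cap2 Pprime Th_with_a Th_without_a) as [P_eq | P_eq].
    + intro y; split.
      * intro Py; split; intros Q [_ [PQ _]]; exact (PQ y Py).
      * intros [with_a_y without_a_y].
        apply (theory_mem_of_totally_prime chains ThP).
        intros Q HQ PQ. destruct (classic (Q a)).
        -- apply with_a_y; split; auto.
        -- apply without_a_y; split; auto.
    + apply Pab_not; left; rewrite P_eq. intros Q [_ [_ Qa]]; exact Qa.
    + apply Pab_not; right; rewrite P_eq. intros Q [HQ [PQ Qa]].
      destruct (proj1 (dl_vee L a b HQ) (PQ _ Pab)); tauto.
  - intro Pab. apply (theory_mem_of_totally_prime chains ThP).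
    intros Q HQ PQ. apply (dl_vee L a b HQ).
    destruct Pab; [left | right]; apply PQ; assumption.
Qed.

End Distributive.

Theorem lemma3p12 (L L' : DistributiveLogic) (h : Expr L -> Expr L') :
  stable_logic_map L L' h ->
  forall a b : Expr L,
    logic_eq L' (h (vee L a b)) (vee L' (h a) (h b)) /\
    logic_eq L' (h (wedge L a b)) (wedge L' (h a) (h b)).
Proof.
  intros [pullback_theory pullback_prime] a b.
  pose proof (dl_chains L') as chains'.
  split; split.
  - apply (entails_of_totally_prime chains'). intros Q HQ Qab.
    pose proof (pullback_prime Q (totally_prime_theory_prime HQ)) as HP.
    apply (dl_vee L' _ _ HQ), (prime_theory_vee a b HP), Qab.
  - apply (entails_of_totally_prime chains'). intros Q HQ Qab.
    pose proof (pullback_prime Q (totally_prime_theory_prime HQ)) as HP.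
    apply (prime_theory_vee a b HP), (dl_vee L' _ _ HQ), Qab.
  - intros T ThT Tab.
    apply (theory_wedge _ _ ThT), (theory_wedge a b (pullback_theory T ThT)), Tab.
  - intros T ThT Tab.
    apply (theory_wedge a b (pullback_theory T ThT)), (theory_wedge _ _ ThT), Tab.
Qed.
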